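(* For each $\alpha\in(0,1)$, the zeta probability $Z_\alpha$, defined by $Z_\alpha(0)=0$ and $Z_\alpha(k)=\zeta(1+\alpha)^{-1}k^{-1-\alpha}$ for $k\in\mathbb{N}$, belongs to $\mathcal{A}$.
   Context: $\zeta(s)=\sum_{n\ge1}n^{-s}$ for $s>1$. $\mathbb{P}(\mathbb{Z}^+)$ is the set of functions $F:\mathbb{Z}\to[0,1]$ with $\sum_kF(k)=1$ and $F(k)=0$ for $k<0$; $F^{(n)}$ is the $n$-th convolution power ($(F_1*F_2)(m)=\sum_kF_1(k)F_2(m-k)$). $\mathcal{A}=\{F\in\mathbb{P}(\mathbb{Z}^+):\sup_{n\in\mathbb{N}}n\sum_k|F^{(n)}(k)-F^{(n+1)}(k)|<\infty\}$. *)

From HB Require Import structures.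
From mathcomp Require Import all_boot all_order all_algebra.
From mathcomp Require Import all_classical all_reals all_analysis.
Set Implicit Arguments. Unset Strict Implicit. Unset Printing Implicit Defensive.
Import Order.TTheory GRing.Theory Num.Theory.
Import numFieldNormedType.Exports.
Local Open Scope ring_scope.

Definition zeta {R : realType} (s : R) : R :=
  limn (series (fun n : nat => (n.+1)%:R `^ (- s))).

(* Functions in P(Z^+) vanish on negative integers; we represent them by
   their restriction to nat (the values at k >= 0). *)
Definition probZp {R : realType} (F : nat -> R) : Prop :=
  (forall k, 0 <= F k <= 1) /\
  (\sum_(0 <= k <oo) (F k)%:E)%E = 1%E.

(* Convolution on Z restricted to functions supported on Z^+: the sum over
   k in Z reduces to k = 0..m. *)
Definition conv {R : realType} (F1 F2 : nat -> R) : nat -> R :=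
  fun m => \sum_(k < m.+1) F1 k * F2 (m - k)%N.

Definition delta0 {R : realType} : nat -> R := fun k => if k == 0%N then 1 else 0.

Fixpoint conv_pow {R : realType} (F : nat -> R) (n : nat) : nat -> R :=
  match n with
  | 0%N => delta0
  | n'.+1 => conv F (conv_pow F n')
  end.

(* The class A: sup_n n * sum_k |F^(n)(k) - F^(n+1)(k)| < oo
   (the series has nonnegative terms; taken in the extended reals). *)
Definition classA {R : realType} (F : nat -> R) : Prop :=
  probZp F /\
  exists C : R, forall n : nat,
    ((n%:R)%:E * \sum_(0 <= k <oo) (`|conv_pow F n k - conv_pow F n.+1 k|)%:E
      <= C%:E)%E.

Definition zeta_prob {R : realType} (alpha : R) : nat -> R :=
  fun k => if k == 0%N then 0 else (zeta (1 + alpha))^-1 * k%:R `^ (- 1 - alpha).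

From mathcomp Require Import all_boot all_order all_algebra.
From mathcomp Require Import all_classical all_reals all_analysis.
From mathcomp Require Import ring lra.
Set Implicit Arguments. Unset Strict Implicit. Unset Printing Implicit Defensive.
Import Order.TTheory GRing.Theory Num.Theory.
Import numFieldNormedType.Exports.
Local Open Scope ring_scope.

(* Truncating Z_alpha at degree L turns its convolution powers into the powers
   of a polynomial P (up to degree L), and the l^1 norm of the first B
   coefficients is submultiplicative.  As Z_alpha is nonincreasing on N^+,
   summation by parts writes P as a mixture sum_j w_j u_j of the uniform
   laws u_j on {1, ..., j+1}.  Telescoping P^N through the partial mixtures
   Q_j = sum_(i < j) w_i u_i reduces |(1 - P) P^N| to the estimates
   |(1 - P) u_j| <= kappa (1 - q_(j+1)), with q_j = sum_(i < j) w_i; the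
   resulting sum of the (1 - t)(t^N - s^N) over consecutive s = q_j and
   t = q_(j+1) is dominated by the increments of t^N - N/(N+1) t^(N+1), whose
   maximum on [0, 1] is 1/(N+1).  The estimate on (1 - P) u_j follows from
   |(1 - X^x) u_j| <= min(2, 2x/(j+1)) and the tail bound
   1 - sum_(k <= j+1) Z_alpha(k) >= c (j+1)^(-alpha). *)

Section TruncatedNorm.
Variable R : realType.
Implicit Types p q : {poly R}.

Definition trunc_norm (B : nat) p : R := \sum_(i < B) `|p`_i|.

Lemma trunc_norm_ge0 B p : 0 <= trunc_norm B p.
Proof. exact: sumr_ge0. Qed.

Lemma trunc_normD B p q : trunc_norm B (p + q) <= trunc_norm B p + trunc_norm B q.
Proof.
rewrite /trunc_norm -big_split /=; apply: ler_sum => i _.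
by rewrite coefD; exact: ler_normD.
Qed.

Lemma trunc_normB B p q : trunc_norm B (p - q) <= trunc_norm B p + trunc_norm B q.
Proof.
have -> : trunc_norm B q = trunc_norm B (- q).
  by apply: eq_bigr => i _; rewrite coefN normrN.
exact: trunc_normD.
Qed.

Lemma trunc_normZ B c p : trunc_norm B (c *: p) = `|c| * trunc_norm B p.
Proof. by rewrite /trunc_norm mulr_sumr; apply: eq_bigr => i _; rewrite coefZ normrM. Qed.

Lemma trunc_norm_sum B (I : Type) (r : seq I) (P : pred I) (F : I -> {poly R}) :
  trunc_norm B (\sum_(i <- r | P i) F i) <= \sum_(i <- r | P i) trunc_norm B (F i).
Proof.
apply: (big_ind2 (fun x y => trunc_norm B x <= y)) => //.
- by rewrite /trunc_norm big1 // => i _; rewrite coef0 normr0.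
- by move=> x1 x2 y1 y2 h1 h2; apply: le_trans (trunc_normD _ _ _) (lerD h1 h2).
Qed.

Lemma sum_conv_triangle (a b : nat -> R) (B : nat) :
  \sum_(k < B) \sum_(j < k.+1) a j * b (k - j)%N =
  \sum_(j < B) a j * \sum_(l < (B - j)%N) b l.
Proof.
elim: B => [|B IH]; first by rewrite !big_ord0.
rewrite big_ord_recr /= IH [RHS]big_ord_recr /= subSnn big_ord1.
rewrite [X in _ = X + _](_ : _ = \sum_(j < B)
    (a j * \sum_(l < (B - j)%N) b l + a j * b (B - j)%N)); last first.
  apply: eq_bigr => j _; rewrite subSn; last exact: ltnW.
  by rewrite big_ord_recr /= mulrDr.
rewrite big_split /= -addrA; congr (_ + _).
by rewrite [LHS]big_ord_recr /= subnn.
Qed.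

Lemma ler_sum_widen (w : nat -> R) (j L : nat) : (forall i, 0 <= w i) ->
  (j <= L)%N -> \sum_(i < j) w i <= \sum_(i < L) w i.
Proof.
move=> w_ge0 jL; rewrite (big_ord_widen _ w jL).
rewrite [X in _ <= X](bigID (fun i : 'I_L => (i < j)%N)) /= lerDl.
exact: sumr_ge0.
Qed.

Lemma trunc_normM B p q : trunc_norm B (p * q) <= trunc_norm B p * trunc_norm B q.
Proof.
rewrite /trunc_norm.
apply: (@le_trans _ _ (\sum_(k < B) \sum_(j < k.+1) `|p`_j| * `|q`_(k - j)|)).
  apply: ler_sum => k _; rewrite coefM.
  by apply: le_trans (ler_norm_sum _ _ _) _; apply: ler_sum => j _; rewrite normrM.
rewrite (sum_conv_triangle (fun j => `|p`_j|) (fun l => `|q`_l|)) mulr_suml.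
apply: ler_sum => j _; apply: ler_wpM2l => //.
exact: (@ler_sum_widen (fun l => `|q`_l|) _ _ (fun=> normr_ge0 _) (leq_subr j B)).
Qed.

Lemma trunc_normXn B j : trunc_norm B 'X^j <= 1.
Proof.
rewrite /trunc_norm; elim: B => [|B IH]; first by rewrite big_ord0.
rewrite big_ord_recr /= coefXn.
have [<-|_] := eqVneq B j; last by rewrite normr0 addr0.
rewrite normr1 big1 ?add0r // => i _.
by rewrite coefXn ltn_eqF ?normr0.
Qed.

Lemma trunc_norm1 B : trunc_norm B 1 <= 1.
Proof. by have := trunc_normXn B 0; rewrite expr0. Qed.

Lemma trunc_normX B p c k : trunc_norm B p <= c -> trunc_norm B (p ^+ k) <= c ^+ k.
Proof.
move=> pc; elim: k => [|k IH]; first by rewrite !expr0 trunc_norm1.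
rewrite !exprS; apply: le_trans (trunc_normM _ _ _) _.
by apply: ler_pM => //; exact: trunc_norm_ge0.
Qed.

End TruncatedNorm.

Section MixturePowers.
Variable R : realType.

Definition phi (N : nat) (t : R) : R := t ^+ N - N%:R / N.+1%:R * t ^+ N.+1.

Lemma phi_incr_ge (N : nat) (a b : R) : 0 <= a -> a <= b ->
  (1 - b) * (b ^+ N - a ^+ N) <= phi N b - phi N a.
Proof.
move=> a0 ab; have b0 : 0 <= b by apply: le_trans ab.
set X := b ^+ N; set Y := a ^+ N.
have hD : 0 <= b * X - N.+1%:R * b * Y + N%:R * a * Y.
  have e1 : b * X - a * Y = (b - a) * \sum_(i < N.+1) b ^+ (N - i) * a ^+ i.
    by rewrite /X /Y -!exprS subrXX.
  have e2 : N.+1%:R * Y <= \sum_(i < N.+1) b ^+ (N - i) * a ^+ i.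
    have -> : N.+1%:R * Y = \sum_(i < N.+1) Y by rewrite sumr_const card_ord mulr_natl.
    apply: ler_sum => i _; rewrite /Y.
    have hi : (i + (N - i) = N)%N by rewrite subnKC // -ltnS.
    rewrite -[in X in X <= _]hi exprD mulrC.
    by apply: ler_wpM2r; [apply: exprn_ge0|apply: lerXn2r; rewrite ?nnegrE].
  have -> : b * X - N.+1%:R * b * Y + N%:R * a * Y =
            (b * X - a * Y) - N.+1%:R * Y * (b - a) by rewrite -natr1; ring.
  by rewrite e1 subr_ge0 mulrC ler_wpM2l // subr_ge0.
rewrite /phi !exprS -/X -/Y.
have -> : X - N%:R / N.+1%:R * (b * X) - (Y - N%:R / N.+1%:R * (a * Y)) =
  (1 - b) * (X - Y) + (b * X - N.+1%:R * b * Y + N%:R * a * Y) / N.+1%:R.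
  by rewrite -natr1; field; rewrite natr1 pnatr_eq0.
by rewrite lerDl divr_ge0.
Qed.

Lemma phi_le_max (N : nat) (t : R) : 0 <= t -> t <= 1 -> phi N t <= N.+1%:R^-1.
Proof.
move=> t0 t1; have := phi_incr_ge N t0 t1.
rewrite subrr mul0r subr_ge0 => /le_trans; apply.
rewrite /phi !expr1n mulr1 le_eqVlt; apply/orP; left; apply/eqP.
by rewrite -natr1; field; rewrite natr1 pnatr_eq0.
Qed.

(* The partial mixtures Q_j satisfy P^N = sum_j (Q_(j+1)^N - Q_j^N), and each
   increment is w_j u_j times a sum of N products of powers of Q_j, Q_(j+1). *)
Lemma trunc_norm_defect_mixture B L (u : nat -> {poly R}) (w : nat -> R)
    (kappa : R) n :
  (forall j, 0 <= w j) -> (forall j, trunc_norm B (u j) <= 1) ->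
  \sum_(j < L) w j <= 1 -> 0 <= kappa ->
  (forall j, (j < L)%N -> trunc_norm B ((1 - \sum_(i < L) w i *: u i) * u j)
       <= kappa * (1 - \sum_(i < j.+1) w i)) ->
  trunc_norm B ((1 - \sum_(i < L) w i *: u i) * (\sum_(i < L) w i *: u i) ^+ n.+1)
    <= kappa / n.+2%:R.
Proof.
move=> w_ge0 u_le1 w_le1 kappa_ge0 defect_u.
set P := \sum_(i < L) w i *: u i.
pose Q j := \sum_(i < j) w i *: u i.
pose q j := \sum_(i < j) w i.
set N := n.+1.
have q_ge0 j : 0 <= q j by apply: sumr_ge0.
have qS j : q j.+1 = q j + w j by rewrite /q big_ord_recr.
have QS j : Q j.+1 = Q j + w j *: u j by rewrite /Q big_ord_recr.
have normQ j : trunc_norm B (Q j) <= q j.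
  apply: le_trans (trunc_norm_sum _ _ _ _) _; apply: ler_sum => i _.
  by rewrite trunc_normZ ger0_norm // ler_piMr.
have P_tel : P ^+ N = \sum_(j < L) (Q j.+1 ^+ N - Q j ^+ N).
  rewrite -(big_mkord xpredT (fun j => Q j.+1 ^+ N - Q j ^+ N)).
  by rewrite telescope_sumr // /Q big_ord0 expr0n /= subr0.
have step j : (j < L)%N -> trunc_norm B ((1 - P) * (Q j.+1 ^+ N - Q j ^+ N))
    <= kappa * ((1 - q j.+1) * (q j.+1 ^+ N - q j ^+ N)).
  move=> jL.
  rewrite subrXX QS addrAC subrr add0r.
  rewrite [q _ ^+ _ - _]subrXX qS addrAC subrr add0r.
  rewrite -scalerAl -scalerAr trunc_normZ ger0_norm // mulrA -QS -qS.
  rewrite [X in _ <= X](_ : _ = w j * (kappa * (1 - q j.+1) *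
    \sum_(i < N) q j.+1 ^+ (N.-1 - i) * q j ^+ i)); last by ring.
  apply: ler_wpM2l => //; apply: le_trans (trunc_normM _ _ _) _.
  apply: ler_pM; [exact: trunc_norm_ge0|exact: trunc_norm_ge0|exact: defect_u|].
  apply: le_trans (trunc_norm_sum _ _ _ _) _; apply: ler_sum => i _.
  apply: le_trans (trunc_normM _ _ _) _.
  by apply: ler_pM; rewrite ?trunc_norm_ge0 ?trunc_normX.
rewrite P_tel mulr_sumr; apply: le_trans (trunc_norm_sum _ _ _ _) _.
apply: (@le_trans _ _ (\sum_(j < L) kappa * (phi N (q j.+1) - phi N (q j)))).
  apply: ler_sum => j _; apply: le_trans (step j (ltn_ord j)) _.
  by rewrite ler_wpM2l // phi_incr_ge // qS lerDl.
rewrite -mulr_sumr -(big_mkord xpredT (fun j => phi N (q j.+1) - phi N (q j))).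
rewrite telescope_sumr // {2}/q big_ord0 /phi !expr0n /= !mulr0 !subr0.
by rewrite ler_wpM2l // phi_le_max.
Qed.

End MixturePowers.

Section PowerSums.
Variable R : realType.

Lemma powR_le_affine (x b : R) : 0 <= x -> 0 < b -> b < 1 ->
  x `^ b <= b * x + (1 - b).
Proof.
move=> x0 b0 b1.
have b1' : 0 < 1 - b by rewrite subr_gt0.
have := @conjugate_powR R (x `^ b) 1 b^-1 (1 - b)^-1 (powR_ge0 _ _) ler01
  ltac:(by rewrite invr_gt0) ltac:(by rewrite invr_gt0)
  ltac:(by rewrite !invrK addrC subrK).
rewrite mulr1 -powRrM mulfV ?gt_eqF // powRr1 // powR1 !invrK.
by rewrite mul1r [x * b]mulrC.
Qed.

Lemma ler_powRN (e x y : R) : 0 <= e -> 0 < x -> x <= y -> y `^ (- e) <= x `^ (- e).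
Proof.
move=> e0 x0 xy; have y0 := lt_le_trans x0 xy.
rewrite !powRN lef_pV2 ?posrE ?powR_gt0 //.
by apply: ge0_ler_powR => //; rewrite nnegrE ltW.
Qed.

Lemma mulr_powRN1 (x e : R) : 0 < x -> x * x `^ (- 1 - e) = x `^ (- e).
Proof.
move=> x0; rewrite -[in RHS](_ : 1 + (- 1 - e) = - e); last by ring.
by rewrite (@powRD _ x 1) ?(gt_eqF x0) ?implybT // powRr1 // ltW.
Qed.

Variable a : R.
Hypothesis a_gt0 : 0 < a.
Hypothesis a_lt1 : a < 1.

Lemma powRN_succ_gap (k : nat) : (1 <= k)%N ->
  a * k.+1%:R `^ (- 1 - a) <= k%:R `^ (- a) - k.+1%:R `^ (- a).
Proof.
move=> k1.
set t : R := k%:R; set c : R := k.+1%:R.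
have t0 : 0 < t by rewrite /t ltr0n.
have c0 : 0 < c by rewrite /c ltr0n.
set A := t `^ a; set C := c `^ a.
have A0 : 0 < A by apply: powR_gt0.
have C0 : 0 < C by apply: powR_gt0.
have AC : A <= C by apply: ge0_ler_powR; rewrite ?nnegrE ?ltW // ltr_nat.
have cA_le : c * A <= (c - a) * C.
  have -> : A = (t / c) `^ a * C.
    by rewrite /A /C -powRM ?divfK ?gt_eqF // ?divr_ge0 ?ltW.
  rewrite mulrA; apply: ler_wpM2r; first exact: ltW.
  have tc_le := powR_le_affine (divr_ge0 (ltW t0) (ltW c0)) a_gt0 a_lt1.
  apply: le_trans (ler_wpM2l (ltW c0) tc_le) _.
  rewrite le_eqVlt; apply/orP; left; apply/eqP.
  by rewrite /t /c -natr1; field; rewrite natr1 gt_eqF.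
have -> : - 1 - a = - (1 + a) by rewrite opprD.
rewrite !powRN -/A -/C (@powRD _ c 1 a); last by rewrite (gt_eqF c0) implybT.
rewrite powRr1 ?(ltW c0) // -/C -subr_ge0.
have -> : A^-1 - C^-1 - a * (c * C)^-1 = (c * (C - A) - a * A) / (c * A * C).
  by field; rewrite !gt_eqF.
apply: divr_ge0; last by apply: ltW; rewrite !mulr_gt0.
have : 0 <= a * (C - A) by apply: mulr_ge0; [exact: ltW | rewrite subr_ge0].
nra.
Qed.

Lemma powR_succ_gap (k : nat) :
  (1 - a) * k.+1%:R `^ (- a) <= k.+1%:R `^ (1 - a) - k%:R `^ (1 - a).
Proof.
set t : R := k%:R; set c : R := k.+1%:R; set b := 1 - a.
have t0 : 0 <= t by rewrite /t ler0n.
have c0 : 0 < c by rewrite /c ltr0n.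
have b0 : 0 < b by rewrite subr_gt0.
have b1 : b < 1 by rewrite ltrBlDr ltrDl.
set C := c `^ (- a).
have C0 : 0 < C by apply: powR_gt0.
have cb : c `^ b = c * C.
  by rewrite /b /C -[1 - a]/(1 + - a) powRD ?implybT ?gt_eqF // powRr1 ?ltW.
have tc0 : 0 <= t / c by rewrite divr_ge0 // ltW.
have tb : t `^ b = (t / c) `^ b * c `^ b by rewrite -powRM ?divfK ?gt_eqF ?(ltW c0).
have affine_le : c * (t / c) `^ b <= c - b.
  have -> : c - b = c * (b * (t / c) + (1 - b)).
    by rewrite /t /c -natr1; field; rewrite natr1 pnatr_eq0.
  by rewrite ler_wpM2l ?(ltW c0) // powR_le_affine.
rewrite tb cb -subr_ge0.
have -> : c * C - (t / c) `^ b * (c * C) - b * C = C * (c - c * (t / c) `^ b - b).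
  by ring.
by rewrite mulr_ge0 ?(ltW C0) //; lra.
Qed.

Lemma sum_powRN_le (m : nat) :
  \sum_(k < m) k.+1%:R `^ (- a) <= m%:R `^ (1 - a) / (1 - a).
Proof.
have b0 : 0 < 1 - a by rewrite subr_gt0.
rewrite ler_pdivlMr // mulr_suml.
apply: (@le_trans _ _ (\sum_(k < m) (k.+1%:R `^ (1 - a) - k%:R `^ (1 - a)))).
  by apply: ler_sum => k _; rewrite mulrC; apply: powR_succ_gap.
rewrite -(big_mkord xpredT (fun k => k.+1%:R `^ (1 - a) - k%:R `^ (1 - a))).
by rewrite telescope_sumr // powR0 ?subr0 // gt_eqF.
Qed.

Lemma sum_powRN1_le (m M : nat) : (1 <= m)%N ->
  \sum_(m <= k < M) k.+1%:R `^ (- 1 - a) <= m%:R `^ (- a) / a.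
Proof.
move=> m1; rewrite ler_pdivlMr // mulr_suml.
have [mM|Mm] := leqP m M; last by rewrite big_geq ?powR_ge0 // ltnW.
apply: (@le_trans _ _ (\sum_(m <= k < M) (k%:R `^ (- a) - k.+1%:R `^ (- a)))).
  rewrite big_nat_cond [X in _ <= X]big_nat_cond.
  apply: ler_sum => k /andP[/andP[mk _] _].
  by rewrite mulrC powRN_succ_gap // (leq_trans m1).
rewrite (eq_bigr (fun k => - (k.+1%:R `^ (- a) - k%:R `^ (- a)))) => [|k _];
  last by rewrite opprB.
by rewrite sumrN telescope_sumr // opprB gerBl powR_ge0.
Qed.

End PowerSums.

Section ZetaProbability.
Variable R : realType.
Variable a : R.
Hypothesis a_gt0 : 0 < a.
Hypothesis a_lt1 : a < 1.

Let zeta_term (n : nat) : R := n.+1%:R `^ (- (1 + a)).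

Lemma zeta_termE n : zeta_term n = n.+1%:R `^ (- 1 - a).
Proof. by rewrite /zeta_term opprD. Qed.

Lemma zeta_series_le N : series zeta_term N <= 1 + a^-1.
Proof.
case: N => [|N]; first by rewrite /series /= big_geq // addr_ge0 // invr_ge0 ltW.
rewrite /series /= big_ltn // zeta_termE powR1 lerD //.
under eq_bigr do rewrite zeta_termE.
by have := sum_powRN1_le a_gt0 a_lt1 N.+1 (leqnn 1); rewrite powR1 mul1r.
Qed.

Lemma zeta_series_nondecreasing : nondecreasing_seq (series zeta_term).
Proof. exact: nondecreasing_series (fun k _ _ => powR_ge0 _ _). Qed.

Lemma zeta_series_cvg : cvgn (series zeta_term).
Proof.
apply: nondecreasing_is_cvgn; first exact: zeta_series_nondecreasing.
by exists (1 + a^-1) => _ [N _ <-]; apply: zeta_series_le.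
Qed.

Lemma zeta_series_le_zeta N : series zeta_term N <= zeta (1 + a).
Proof. exact: (nondecreasing_cvgn_le zeta_series_nondecreasing zeta_series_cvg). Qed.

Lemma zeta_gt0 : 0 < zeta (1 + a).
Proof.
apply: lt_le_trans ltr01 (le_trans _ (zeta_series_le_zeta 1)).
by rewrite /series /= big_nat1 /zeta_term powR1.
Qed.

Notation F := (zeta_prob a).
Notation z := (zeta (1 + a)).

Lemma zeta_prob0 : F 0 = 0.
Proof. by []. Qed.

Lemma zeta_probS k : F k.+1 = z^-1 * k.+1%:R `^ (- 1 - a).
Proof. by []. Qed.

Lemma zeta_prob_ge0 k : 0 <= F k.
Proof.
case: k => [|k] //; rewrite zeta_probS mulr_ge0 ?powR_ge0 //.
by rewrite invr_ge0 ltW // zeta_gt0.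
Qed.

Lemma zeta_prob_le (i j : nat) : (1 <= i)%N -> (i <= j)%N -> F j <= F i.
Proof.
case: i => // i _; case: j => // j ij.
rewrite !zeta_probS ler_wpM2l // ?invr_ge0 ?(ltW zeta_gt0) //.
rewrite [- 1 - a](_ : _ = - (1 + a)); last by rewrite opprD.
by apply: ler_powRN; rewrite ?addr_ge0 ?(ltW a_gt0) ?ltr0n ?ler_nat.
Qed.

Definition zeta_cdf (N : nat) : R := \sum_(k < N) F k.

Lemma zeta_cdfS N : zeta_cdf N.+1 = z^-1 * series zeta_term N.
Proof.
rewrite /zeta_cdf big_ord_recl zeta_prob0 add0r /series /= big_mkord mulr_sumr.
by apply: eq_bigr => i _; rewrite zeta_probS zeta_termE.
Qed.

Lemma zeta_cdf_le1 N : zeta_cdf N <= 1.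
Proof.
case: N => [|N]; first by rewrite /zeta_cdf big_ord0.
by rewrite zeta_cdfS ler_pdivrMl ?zeta_gt0 // mulr1 zeta_series_le_zeta.
Qed.

Lemma le_zeta_cdf i j : (i <= j)%N -> zeta_cdf i <= zeta_cdf j.
Proof. exact/ler_sum_widen/zeta_prob_ge0. Qed.

Lemma zeta_prob_le1 k : F k <= 1.
Proof.
apply: le_trans (zeta_cdf_le1 k.+1).
by rewrite /zeta_cdf big_ord_recr /= lerDr sumr_ge0 // => i _; apply: zeta_prob_ge0.
Qed.

Lemma zeta_cdf_cvg : (zeta_cdf @ \oo --> (1 : R))%classic.
Proof.
suff shifted : ((fun N => zeta_cdf N.+1) @ \oo --> (1 : R))%classic.
  by rewrite -cvg_shiftS.
have -> : (fun N => zeta_cdf N.+1) = (fun N => z^-1 * series zeta_term N).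
  by apply: funext => N; rewrite zeta_cdfS.
have h := @cvgMl_tmp R nat \oo%classic _ (series zeta_term) z^-1 _ zeta_series_cvg.
rewrite mulVf ?(lt0r_neq0 zeta_gt0) // in h.
exact: h.
Qed.

Lemma zeta_prob_double_ge (m : nat) : (1 <= m)%N ->
  z^-1 * m%:R `^ (- a) / 4 <= m%:R * F m.*2.
Proof.
move=> m1; have m0 : 0 < m%:R :> R by rewrite ltr0n.
have -> : F m.*2 = z^-1 * (2 * m%:R) `^ (- 1 - a).
  by case: m m1 {m0} => // m _; rewrite doubleS zeta_probS -doubleS -muln2 mulnC natrM.
rewrite (@powRM _ 2) ?ler0n //.
rewrite (_ : m%:R * _ = z^-1 * (2 `^ (- 1 - a) * (m%:R * m%:R `^ (- 1 - a)))); last by ring.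
rewrite mulr_powRN1 // -mulrA; apply: ler_wpM2l; first by rewrite invr_ge0 ltW ?zeta_gt0.
rewrite mulrC; apply: ler_wpM2r; first exact: powR_ge0.
have -> : 4^-1 = 2 `^ (-2) :> R by rewrite powRN powR_mulrn // expr2 -natrM.
have exp_le : - 2 <= - 1 - a :> R by have := a_lt1; lra.
by apply: ler_powR exp_le; rewrite ler1n.
Qed.

Lemma zeta_cdf_tail_ge (m : nat) : (1 <= m)%N ->
  z^-1 * m%:R `^ (- a) / 4 <= 1 - zeta_cdf m.+1.
Proof.
move=> m1; apply: le_trans (zeta_prob_double_ge m1) _.
apply: (@le_trans _ _ (zeta_cdf (m.*2).+1 - zeta_cdf m.+1)); last first.
  by rewrite lerB // zeta_cdf_le1.
have -> : zeta_cdf (m.*2).+1 - zeta_cdf m.+1 = \sum_(m.+1 <= k < (m.*2).+1) F k.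
  rewrite /zeta_cdf -!(big_mkord xpredT) (@big_cat_nat _ _ _ m.+1) //=.
    by rewrite addrAC subrr add0r.
  by rewrite ltnS -addnn leq_addr.
have -> : m%:R * F m.*2 = \sum_(m.+1 <= k < (m.*2).+1) F m.*2.
  by rewrite sumr_const_nat subSS (_ : (m.*2 - m = m)%N) ?mulr_natl // -addnn addnK.
rewrite big_nat_cond [X in _ <= X]big_nat_cond.
apply: ler_sum => k /andP[/andP[mk km] _].
by apply: zeta_prob_le; [exact: leq_trans m1 (ltnW mk) | rewrite -ltnS].
Qed.

End ZetaProbability.

Section ZetaMixture.
Variable R : realType.

Definition geom_poly (n : nat) : {poly R} := \sum_(i < n) 'X^i.

Lemma trunc_norm_X_geom B n : trunc_norm B ('X * geom_poly n) <= n%:R.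
Proof.
apply: le_trans (trunc_normM _ _ _) _; rewrite -[n%:R]mul1r.
apply: ler_pM; rewrite ?trunc_norm_ge0 //.
  by rewrite -[X in trunc_norm _ X]expr1 trunc_normXn.
apply: le_trans (trunc_norm_sum _ _ _ _) _.
apply: le_trans (_ : \sum_(i < n) (1 : R) <= _); last by rewrite sumr_const card_ord.
by apply: ler_sum => i _; exact: trunc_normXn.
Qed.

Lemma sub1Xn_geom n : 1 - 'X^n = - (('X - 1) * geom_poly n).
Proof. by rewrite /geom_poly -subrX1 opprB. Qed.

Lemma sum_by_parts_geom (h : nat -> R) L :
  \sum_(j < L) (h j.+1 - h j.+2) *: ('X * geom_poly j.+1) =
  \sum_(x < L) h x.+1 *: 'X^(x.+1) - h L.+1 *: ('X * geom_poly L).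
Proof.
elim: L => [|L IH]; first by rewrite !big_ord0 /geom_poly big_ord0 mulr0 scaler0 subrr.
rewrite big_ord_recr /= IH [in RHS]big_ord_recr /= /geom_poly big_ord_recr /=.
by rewrite scalerBl mulrDr exprS scalerDr -!addrA addKr.
Qed.

Lemma sum_by_parts_nat (h : nat -> R) J :
  \sum_(i < J) i.+1%:R * (h i.+1 - h i.+2) = \sum_(x < J) h x.+1 - J%:R * h J.+1.
Proof.
elim: J => [|J IH]; first by rewrite !big_ord0 mul0r subrr.
by rewrite big_ord_recr /= IH [in RHS]big_ord_recr /= -natr1; ring.
Qed.

Variable a : R.
Hypothesis a_gt0 : 0 < a.
Hypothesis a_lt1 : a < 1.

Notation F := (zeta_prob a).
Notation z := (zeta (1 + a)).

Definition trunc_poly (L : nat) : {poly R} := \poly_(x < L.+1) F x.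

(* The uniform law on {1, ..., j+1}, and the weights making trunc_poly L the
   mixture of these laws (summation by parts, using that F is nonincreasing). *)
Definition unif_poly (j : nat) : {poly R} := j.+1%:R^-1 *: ('X * geom_poly j.+1).
Definition trunc_prob (L x : nat) : R := if (x <= L)%N then F x else 0.
Definition mix_weight (L j : nat) : R :=
  j.+1%:R * (trunc_prob L j.+1 - trunc_prob L j.+2).

Lemma trunc_poly_exp_coef L n k : (k <= L)%N -> (trunc_poly L ^+ n)`_k = conv_pow F n k.
Proof.
elim: n k => [|n IH] k kL; first by rewrite expr0 coef1 /= /delta0; case: (k == 0%N).
rewrite exprS coefM; apply: eq_bigr => j _.
rewrite IH; last exact: leq_trans (leq_subr _ _) kL.
by rewrite coef_poly ltnS (leq_trans _ kL) // -ltnS.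
Qed.

Lemma trunc_prob_ge0 L x : 0 <= trunc_prob L x.
Proof. by rewrite /trunc_prob; case: ifP => _; rewrite ?zeta_prob_ge0. Qed.

Lemma mix_weight_ge0 L j : 0 <= mix_weight L j.
Proof.
rewrite /mix_weight mulr_ge0 // subr_ge0 /trunc_prob.
have [jL|Lj] := leqP j.+2 L; last by case: ifP => _; rewrite ?zeta_prob_ge0.
by rewrite (leq_trans (leqnSn _) jL) zeta_prob_le.
Qed.

Lemma trunc_poly_mixture L : \sum_(j < L) mix_weight L j *: unif_poly j = trunc_poly L.
Proof.
have -> : \sum_(j < L) mix_weight L j *: unif_poly j =
    \sum_(j < L) (trunc_prob L j.+1 - trunc_prob L j.+2) *: ('X * geom_poly j.+1).
  by apply: eq_bigr => j _; rewrite scalerA mulrAC mulfV ?mul1r.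
rewrite sum_by_parts_geom /trunc_prob ltnn scale0r subr0 /trunc_poly poly_def.
rewrite big_ord_recl zeta_prob0 scale0r add0r.
by apply: eq_bigr => i _; rewrite ltn_ord.
Qed.

Lemma sum_mix_weight_le L J : \sum_(i < J) mix_weight L i <= zeta_cdf a J.+1.
Proof.
rewrite sum_by_parts_nat /zeta_cdf big_ord_recl zeta_prob0 add0r.
apply: le_trans (_ : \sum_(x < J) trunc_prob L x.+1 <= _).
  by rewrite gerBl mulr_ge0 ?trunc_prob_ge0.
apply: ler_sum => i _; rewrite /trunc_prob; case: ifP => _ //.
exact: zeta_prob_ge0.
Qed.

Lemma trunc_norm_unif B j : trunc_norm B (unif_poly j) <= 1.
Proof.
rewrite trunc_normZ ger0_norm ?invr_ge0 //.
by rewrite ler_pdivrMl ?ltr0n // mulr1 trunc_norm_X_geom.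
Qed.

Lemma trunc_norm_sub1Xn_unif_lin B x j :
  trunc_norm B ((1 - 'X^x) * unif_poly j) <= 2 * x%:R / j.+1%:R.
Proof.
have -> : (1 - 'X^x) * unif_poly j =
    j.+1%:R^-1 *: ((1 - 'X^(j.+1)) * ('X * geom_poly x)).
  by rewrite /unif_poly -scalerAr !sub1Xn_geom; congr (_ *: _); ring.
rewrite trunc_normZ ger0_norm ?invr_ge0 // mulrC ler_wpM2r ?invr_ge0 //.
apply: le_trans (trunc_normM _ _ _) _.
apply: ler_pM; rewrite ?trunc_norm_ge0 ?trunc_norm_X_geom //.
apply: le_trans (trunc_normB _ _ _) _.
by have := trunc_norm1 R B; have := trunc_normXn R B (j.+1); lra.
Qed.

Lemma trunc_norm_sub1Xn_unif B x j : trunc_norm B ((1 - 'X^x) * unif_poly j) <= 2.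
Proof.
apply: le_trans (trunc_normM _ _ _) _; rewrite -[2]mulr1.
apply: ler_pM; rewrite ?trunc_norm_ge0 ?trunc_norm_unif //.
apply: le_trans (trunc_normB _ _ _) _.
by have := trunc_norm1 R B; have := trunc_normXn R B x; lra.
Qed.


Lemma sub1_trunc_poly L :
  1 - trunc_poly L = (1 - zeta_cdf a L.+1) *: 1 + \sum_(x < L.+1) F x *: (1 - 'X^x).
Proof.
under [X in _ = _ + X]eq_bigr do rewrite scalerBr.
rewrite sumrB -scaler_suml /trunc_poly poly_def /zeta_cdf scalerBl scale1r.
by rewrite addrA subrK.
Qed.

Lemma trunc_norm_defect_unif_le B L j :
  trunc_norm B ((1 - trunc_poly L) * unif_poly j) <= (1 - zeta_cdf a L.+1) +
    \sum_(x < L.+1) F x * (if (x <= j.+1)%N then 2 * x%:R / j.+1%:R else 2).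
Proof.
rewrite sub1_trunc_poly mulrDl mulr_suml; apply: le_trans (trunc_normD _ _ _) _.
rewrite -scalerAl mul1r trunc_normZ ger0_norm ?subr_ge0 ?zeta_cdf_le1 //.
apply: lerD; first by rewrite ler_piMr ?subr_ge0 ?zeta_cdf_le1 ?trunc_norm_unif.
apply: le_trans (trunc_norm_sum _ _ _ _) _; apply: ler_sum => x _.
rewrite -scalerAl trunc_normZ ger0_norm ?zeta_prob_ge0 // ler_wpM2l ?zeta_prob_ge0 //.
by case: ifP => _; rewrite ?trunc_norm_sub1Xn_unif_lin ?trunc_norm_sub1Xn_unif.
Qed.

Lemma sum_zeta_prob_lin_le m : (1 <= m)%N ->
  \sum_(0 <= x < m.+1) F x * (2 * x%:R / m%:R)
    <= 2 * (z^-1 * m%:R `^ (- a)) * (1 - a)^-1.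
Proof.
move=> m1; have z0 := zeta_gt0 a_gt0 a_lt1.
have m0 : 0 < m%:R :> R by rewrite ltr0n.
rewrite big_nat_recl // zeta_prob0 mul0r add0r.
have termE x : F x.+1 * (2 * x.+1%:R / m%:R) = 2 / (m%:R * z) * x.+1%:R `^ (- a).
  by rewrite zeta_probS -(@mulr_powRN1 R x.+1%:R a) ?ltr0n //; field; rewrite !gt_eqF.
under eq_bigr do rewrite termE.
rewrite -mulr_sumr big_mkord.
apply: le_trans (ler_wpM2l _ (sum_powRN_le a_gt0 a_lt1 m)) _.
  by rewrite divr_ge0 ?mulr_ge0 ?ltW.
have -> : m%:R `^ (1 - a) = m%:R * m%:R `^ (- a) :> R.
  by rewrite (@powRD _ m%:R 1 (- a)) ?(gt_eqF m0) ?implybT // powRr1 // ltW.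
rewrite le_eqVlt; apply/orP; left; apply/eqP.
have a1 : 1 - a != 0 by rewrite subr_eq0 eq_sym lt_eqF.
by field; rewrite a1 !gt_eqF.
Qed.

Lemma sum_zeta_prob_tail_le m L : (1 <= m)%N ->
  \sum_(m.+1 <= x < L.+1) F x * 2 <= 2 * (z^-1 * m%:R `^ (- a)) * a^-1.
Proof.
move=> m1; have z0 := zeta_gt0 a_gt0 a_lt1.
rewrite big_add1 /= -mulr_suml.
under eq_bigr do rewrite zeta_probS.
rewrite -mulr_sumr mulrC -!mulrA ler_wpM2l // ler_wpM2l ?invr_ge0 ?(ltW z0) //.
exact: sum_powRN1_le.
Qed.

(* 1 bounds the tail mass, 8 = 2 * 4 comes from the two sums above and the
   factor 4 of zeta_cdf_tail_ge. *)
Definition zeta_kappa : R := 1 + 8 * ((1 - a)^-1 + a^-1).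

Lemma zeta_kappa_ge0 : 0 <= zeta_kappa.
Proof. by rewrite addr_ge0 // mulr_ge0 // addr_ge0 // invr_ge0 ltW // subr_gt0. Qed.

Lemma trunc_norm_defect_unif B L j : (j < L)%N ->
  trunc_norm B ((1 - trunc_poly L) * unif_poly j) <= zeta_kappa * (1 - zeta_cdf a j.+2).
Proof.
move=> jL; set m := j.+1; have m1 : (1 <= m)%N by [].
set s := zeta_cdf a L.+1; set D := 1 - zeta_cdf a m.+1.
have sD : 1 - s <= D by rewrite /D lerB // le_zeta_cdf.
have tail := zeta_cdf_tail_ge a_gt0 a_lt1 m1; rewrite -/D in tail.
set T := z^-1 * m%:R `^ (- a) in tail *.
apply: le_trans (trunc_norm_defect_unif_le B L j) _.
rewrite -/m -/s -(big_mkord (fun=> true)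
  (fun x => F x * (if (x <= m)%N then 2 * x%:R / m%:R else 2))).
rewrite (@big_cat_nat _ _ _ m.+1) //=.
rewrite [X in _ + (X + _)](eq_big_nat _ _ (F2 := fun x => F x * (2 * x%:R / m%:R)));
  last by move=> x /andP[_ xm]; rewrite -ltnS xm.
rewrite [X in _ + (_ + X)](eq_big_nat _ _ (F2 := fun x => F x * 2));
  last by move=> x /andP[mx _]; rewrite leqNgt mx.
set S1 := \sum_(0 <= i < m.+1) _; set S2 := \sum_(m.+1 <= i < L.+1) _.
have head : S1 <= 2 * T * (1 - a)^-1 by exact: sum_zeta_prob_lin_le.
have tl : S2 <= 2 * T * a^-1 by exact: sum_zeta_prob_tail_le.
have c0 : 0 <= (1 - a)^-1 + a^-1 by rewrite addr_ge0 // invr_ge0 ltW // subr_gt0.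
have T4 : T * ((1 - a)^-1 + a^-1) <= 4 * D * ((1 - a)^-1 + a^-1).
  by rewrite ler_wpM2r // mulrC -ler_pdivrMr.
rewrite /zeta_kappa; move: sD head tl T4 c0.
clearbody m s D T S1 S2; generalize ((1 - a)^-1) (a^-1) => c1 c2.
nra.
Qed.

End ZetaMixture.

Section ZetaClassA.
Variable R : realType.
Variable a : R.
Hypothesis a_gt0 : 0 < a.
Hypothesis a_lt1 : a < 1.

Notation F := (zeta_prob a).

Lemma sum_conv_pow_diff_le n K :
  \sum_(k < K) `|conv_pow F n.+1 k - conv_pow F n.+2 k| <= zeta_kappa a / n.+2%:R.
Proof.
have -> : \sum_(k < K) `|conv_pow F n.+1 k - conv_pow F n.+2 k| =
    trunc_norm K ((1 - trunc_poly a K) * trunc_poly a K ^+ n.+1).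
  rewrite mulrBl mul1r -exprS; apply: eq_bigr => k _.
  by rewrite coefB !trunc_poly_exp_coef // ltnW.
have kappa0 := zeta_kappa_ge0 a_gt0 a_lt1.
have wsum_le J : \sum_(i < J) mix_weight a K i <= zeta_cdf a J.+1.
  exact: sum_mix_weight_le.
rewrite -(trunc_poly_mixture a K) trunc_norm_defect_mixture //.
- by move=> j; apply: mix_weight_ge0.
- by move=> j; apply: trunc_norm_unif.
- exact: le_trans (wsum_le K) (zeta_cdf_le1 a_gt0 a_lt1 _).
move=> j jK; rewrite trunc_poly_mixture.
apply: le_trans (trunc_norm_defect_unif a_gt0 a_lt1 K jK) _.
by rewrite ler_wpM2l // lerB.
Qed.

Lemma zeta_prob_classA_bound n :
  ((n%:R)%:E * \sum_(0 <= k <oo) (`|conv_pow F n k - conv_pow F n.+1 k|)%:E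
    <= (zeta_kappa a)%:E)%E.
Proof.
have kappa0 := zeta_kappa_ge0 a_gt0 a_lt1.
case: n => [|n]; first by rewrite mul0e lee_fin.
apply: (@le_trans _ _ ((n.+1%:R)%:E * (zeta_kappa a / n.+2%:R)%:E)%E).
  apply: lee_wpmul2l; first by rewrite lee_fin ler0n.
  apply: lime_le; first by apply: is_cvg_nneseries => k _ _; rewrite lee_fin.
  apply: nearW => K; rewrite sumEFin lee_fin big_mkord.
  exact: sum_conv_pow_diff_le.
rewrite -EFinM lee_fin mulrCA ler_piMr //.
by rewrite ler_pdivrMr ?ltr0n // mul1r ler_nat.
Qed.

Lemma zeta_prob_probZp : probZp F.
Proof.
split=> [k|]; first by rewrite zeta_prob_ge0 ?zeta_prob_le1.
have -> : (fun n => \sum_(0 <= k < n) (F k)%:E)%E = EFin \o zeta_cdf a.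
  by apply: funext => n; rewrite sumEFin big_mkord.
have cdf_cvg := zeta_cdf_cvg a_gt0 a_lt1.
by rewrite EFin_lim ?(cvg_lim _ cdf_cvg) //; apply/cvg_ex; exists 1.
Qed.

End ZetaClassA.

Theorem theorem5p4 (R : realType) (alpha : R) :
  0 < alpha < 1 -> classA (zeta_prob alpha).
Proof.
move=> /andP[a_gt0 a_lt1]; split; first exact: zeta_prob_probZp.
by exists (zeta_kappa alpha); exact: zeta_prob_classA_bound.
Qed.
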